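(* Let $\mathcal{A}$ be a primal algebra and let $<$ be a linear order on its universe $A$. Then $\mathbf{OV}_{\mathit{fin}}(\mathcal{A},<)$ is a reasonable order expansion of $\mathbf{V}_{\mathit{fin}}(\mathcal{A})$.
   Context: A primal algebra is a finite algebra with at least two elements in which every finitary operation on its universe is a term operation. $\mathbf{V}_{\mathit{fin}}(\mathcal{A})$ is the category whose objects are the finite algebras in the variety generated by $\mathcal{A}$ and whose morphisms are embeddings. For a linear order $<$ on $A$ and a positive integer $n$, the antilexicographic order $\sqsubset$ on $A^n$ is: $(x_1,\dots,x_n)\sqsubset(y_1,\dots,y_n)$ iff there is $s$ with $x_t=y_t$ for all $t>s$ and $x_s<y_s$. For a permutation $\pi$ of $\{1,\dots,n\}$, $\bar x\sqsubset_\pi\bar y$ iff $(x_{\pi(1)},\dots,x_{\pi(n)})\sqsubset(y_{\pi(1)},\dots,y_{\pi(n)})$; $\sqsubseteq_\pi$ is its reflexive version and $\mathcal{A}^n_{\sqsubseteq_\pi}$ is the power algebra $\mathcal{A}^n$ expanded by $\sqsubseteq_\pi$. $\mathbf{OV}_{\mathit{fin}}(\mathcal{A},<)$ is the category whose objects are all structures isomorphic to some $\mathcal{A}^n_{\sqsubseteq_\pi}$ and whose morphisms are embeddings. If $\mathbf{C}$ is a category of finite structures with embeddings and $\mathbf{C}^*$ a category of finite ordered structures with embeddings, $\mathbf{C}^*$ is an order expansion of $\mathbf{C}$ if for every object $(A,\Delta,<)$ of $\mathbf{C}^*$ the reduct $(A,\Delta)$ is an object of $\mathbf{C}$ and the forgetful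 functor $U:\mathbf{C}^*\to\mathbf{C}$ (dropping the order, identity on maps) is surjective on objects; it is reasonable if for all objects $\mathcal{A},\mathcal{B}$ of $\mathbf{C}$, every embedding $f:\mathcal{A}\to\mathcal{B}$ and every object $\mathcal{A}_<$ of $\mathbf{C}^*$ with $U(\mathcal{A}_<)=\mathcal{A}$ there is an object $\mathcal{B}_\sqsubset$ of $\mathbf{C}^*$ with $U(\mathcal{B}_\sqsubset)=\mathcal{B}$ and $f$ an embedding of $\mathcal{A}_<$ into $\mathcal{B}_\sqsubset$. *)

From mathcomp Require Import all_boot perm.
Set Implicit Arguments. Unset Strict Implicit. Unset Printing Implicit Defensive.

Record signature := Signature { fsym : Type; arity : fsym -> nat }.

Definition operations (S : signature) (T : Type) :=
  forall f : fsym S, ('I_(arity f) -> T) -> T.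

Inductive term (S : signature) (k : nat) : Type :=
  | Var : 'I_k -> term S k
  | App : forall f : fsym S, ('I_(arity f) -> term S k) -> term S k.

Fixpoint eval (S : signature) (T : Type) (o : operations S T) (k : nat)
  (v : 'I_k -> T) (t : term S k) : T :=
  match t with
  | Var i => v i
  | App f a => o f (fun j => eval o v (a j))
  end.

Definition primal (S : signature) (A : finType) (oA : operations S A) : Prop :=
  1 < #|A| /\
  forall (k : nat) (g : ('I_k.+1 -> A) -> A),
    exists t : term S k.+1, forall v, eval oA v t = g v.

Definition satisfies_identities_of (S : signature) (A : Type) (oA : operations S A)
  (T : Type) (oT : operations S T) : Prop :=
  forall (k : nat) (s t : term S k),
    (forall v : 'I_k -> A, eval oA v s = eval oA v t) ->
    forall w : 'I_k -> T, eval oT w s = eval oT w t.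

(* Objects of V_fin(A): finite (nonempty) algebras in the variety generated by A. *)
Definition in_Vfin (S : signature) (A : Type) (oA : operations S A)
  (T : finType) (oT : operations S T) : Prop :=
  0 < #|T| /\ satisfies_identities_of oA oT.

Definition is_hom (S : signature) (T1 T2 : Type) (o1 : operations S T1)
  (o2 : operations S T2) (h : T1 -> T2) : Prop :=
  forall (f : fsym S) (args : 'I_(arity f) -> T1),
    h (o1 f args) = o2 f (fun j => h (args j)).

Definition is_embedding (S : signature) (T1 T2 : Type) (o1 : operations S T1)
  (o2 : operations S T2) (h : T1 -> T2) : Prop :=
  is_hom o1 o2 h /\ injective h.

Definition is_ord_embedding (S : signature) (T1 T2 : Type)
  (o1 : operations S T1) (r1 : T1 -> T1 -> Prop)
  (o2 : operations S T2) (r2 : T2 -> T2 -> Prop) (h : T1 -> T2) : Prop :=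
  is_embedding o1 o2 h /\ forall x y, r1 x y <-> r2 (h x) (h y).

Definition power_ops (S : signature) (A : Type) (oA : operations S A) (n : nat)
  : operations S {ffun 'I_n -> A} :=
  fun f args => [ffun i => oA f (fun j => args j i)].

Definition antilex_lt (A : Type) (lt : A -> A -> Prop) (n : nat) (pi : 'S_n)
  (x y : {ffun 'I_n -> A}) : Prop :=
  exists s : 'I_n,
    (forall t : 'I_n, (s < t)%N -> x (pi t) = y (pi t)) /\ lt (x (pi s)) (y (pi s)).

Definition antilex_le (A : Type) (lt : A -> A -> Prop) (n : nat) (pi : 'S_n)
  (x y : {ffun 'I_n -> A}) : Prop :=
  x = y \/ antilex_lt lt pi x y.

(* Objects of OV_fin(A,<): ordered structures isomorphic to some A^n_{⊑pi}. *)
Definition in_OVfin (S : signature) (A : Type) (oA : operations S A)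
  (lt : A -> A -> Prop) (T : finType) (oT : operations S T) (r : T -> T -> Prop)
  : Prop :=
  exists (n : nat) (pi : 'S_n) (h : T -> {ffun 'I_n -> A}),
    bijective h /\ is_ord_embedding oT r (@power_ops S A oA n) (antilex_le lt pi) h.

Definition strict_linear_order (A : Type) (lt : A -> A -> Prop) : Prop :=
  (forall x, ~ lt x x) /\
  (forall x y z, lt x y -> lt y z -> lt x z) /\
  (forall x y, x <> y -> lt x y \/ lt y x).

Definition linear_order (T : Type) (r : T -> T -> Prop) : Prop :=
  (forall x, r x x) /\
  (forall x y, r x y -> r y x -> x = y) /\
  (forall x y z, r x y -> r y z -> r x z) /\
  (forall x y, r x y \/ r y x).

(* C* is an order expansion of C (with forgetful functor dropping the order). *)
Definition is_order_expansion (S : signature)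
  (C : forall T : finType, operations S T -> Prop)
  (Cs : forall T : finType, operations S T -> (T -> T -> Prop) -> Prop) : Prop :=
  (forall (T : finType) (o : operations S T) (r : T -> T -> Prop),
      Cs T o r -> linear_order r /\ C T o) /\
  (forall (T : finType) (o : operations S T), C T o -> exists r, Cs T o r).

Definition is_reasonable (S : signature)
  (C : forall T : finType, operations S T -> Prop)
  (Cs : forall T : finType, operations S T -> (T -> T -> Prop) -> Prop) : Prop :=
  forall (T1 T2 : finType) (o1 : operations S T1) (o2 : operations S T2)
         (f : T1 -> T2),
    C T1 o1 -> C T2 o2 -> is_embedding o1 o2 f ->
    forall r1 : T1 -> T1 -> Prop, Cs T1 o1 r1 ->
    exists r2 : T2 -> T2 -> Prop, Cs T2 o2 r2 /\ is_ord_embedding o1 r1 o2 r2 f.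

From mathcomp Require Import all_boot perm zify.
From Stdlib Require Import FunctionalExtensionality.
Set Implicit Arguments. Unset Strict Implicit. Unset Printing Implicit Defensive.

(* Since every operation on A is a term operation, a homomorphism out of a power
   A^I respects the pointwise "and", "equality" and "if-then-else" operations, which
   forces its kernel to be agreement on a set J of coordinates.  Every finite algebra of
   the variety is a homomorphic image of a finite free algebra A^(A^k), hence is
   isomorphic to A^J; and every homomorphism A^n -> A is a projection, so an
   embedding A^n -> A^m is x |-> x o g for a surjection g.  Numbering the coordinates
   of m compatibly with the pi-ranks of their images under g turns x |-> x o g into an
   order embedding of antilexicographic orders, which gives the reasonable expansion. *)

Definition pointwise_ops (S : signature) (A : Type) (oA : operations S A)
  (I : finType) : operations S {ffun I -> A} :=
  fun f args => [ffun i => oA f (fun j => args j i)].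
Arguments pointwise_ops {S A} oA I.

Section Terms.
Variable S : signature.

Lemma eq_eval (A : Type) (oA : operations S A) k (v v' : 'I_k -> A) t :
  v =1 v' -> eval oA v t = eval oA v' t.
Proof.
move=> vv'; elim: t => [i|f a IH] /=; first exact: vv'.
by congr (oA f _); apply: functional_extensionality.
Qed.

Lemma hom_eval (T1 T2 : Type) (o1 : operations S T1) (o2 : operations S T2) h
  k (v : 'I_k -> T1) t :
  is_hom o1 o2 h -> h (eval o1 v t) = eval o2 (fun j => h (v j)) t.
Proof.
move=> h_hom; elim: t => [i|f a IH] //=.
by rewrite h_hom; congr (o2 f _); apply: functional_extensionality.
Qed.

Lemma eval_pointwise (A : Type) (oA : operations S A) (I : finType) k
  (v : 'I_k -> {ffun I -> A}) t :
  eval (pointwise_ops oA I) v t = [ffun m => eval oA (fun j => v j m) t].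
Proof.
apply/ffunP => m; rewrite ffunE; elim: t => [i|f a IH] //=.
by rewrite ffunE; congr (oA f _); apply: functional_extensionality.
Qed.

Lemma comp_hom (T1 T2 T3 : Type) (o1 : operations S T1) (o2 : operations S T2)
  (o3 : operations S T3) (f : T1 -> T2) (g : T2 -> T3) :
  is_hom o1 o2 f -> is_hom o2 o3 g -> is_hom o1 o3 (g \o f).
Proof. by move=> f_hom g_hom h args /=; rewrite f_hom g_hom. Qed.

Lemma inv_hom (T1 T2 : Type) (o1 : operations S T1) (o2 : operations S T2)
  (f : T1 -> T2) (f' : T2 -> T1) :
  is_hom o1 o2 f -> injective f -> cancel f' f -> is_hom o2 o1 f'.
Proof.
move=> f_hom f_inj f'K h args; apply: f_inj; rewrite f_hom f'K.
by congr (o2 h _); apply: functional_extensionality => j; rewrite f'K.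
Qed.

End Terms.

Section Primal.
Variables (S : signature) (A : finType) (oA : operations S A).
Hypothesis term_complete : forall (k : nat) (g : ('I_k.+1 -> A) -> A),
  exists t : term S k.+1, forall v, eval oA v t = g v.

Lemma hom_pointwise_congr (I : finType) (T : Type) (oT : operations S T)
  (Phi : {ffun I -> A} -> T) (g : A -> A -> A -> A) (y z u u' : {ffun I -> A}) :
  is_hom (pointwise_ops oA I) oT Phi -> Phi u = Phi u' ->
  Phi [ffun m => g (u m) (y m) (z m)] = Phi [ffun m => g (u' m) (y m) (z m)].
Proof.
move=> Phi_hom uu'.
pose args x (j : 'I_3) := match val j with 0 => x | 1 => y | _ => z end.
have [t gE] := term_complete
  (fun w : 'I_3 -> A => g (w ord0) (w (@Ordinal 3 1 isT)) (w ord_max)).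
have argsE (x : {ffun I -> A}) :
    [ffun m => g (x m) (y m) (z m)] = eval (pointwise_ops oA I) (args x) t.
  by rewrite eval_pointwise; apply/ffunP => m; rewrite !ffunE gE.
rewrite !argsE !(hom_eval _ _ Phi_hom).
by apply: eq_eval => -[[|[|[|]]]].
Qed.

Lemma hom_const (I : finType) (phi : {ffun I -> A} -> A) :
  is_hom (pointwise_ops oA I) oA phi -> forall a, phi [ffun _ => a] = a.
Proof.
move=> phi_hom a; have [t tE] := @term_complete 0 (fun _ => a).
have -> : [ffun _ : I => a] = eval (pointwise_ops oA I) (fun _ => [ffun _ => a]) t.
  by rewrite eval_pointwise; apply/ffunP => m; rewrite !ffunE tE.
by rewrite (hom_eval _ _ phi_hom) tE.
Qed.

Variables (a0 a1 : A).
Hypothesis a0_neq_a1 : a0 != a1.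

Section Kernel.
Variables (I : finType) (T : eqType) (oT : operations S T).
Variable Phi : {ffun I -> A} -> T.
Hypothesis Phi_hom : is_hom (pointwise_ops oA I) oT Phi.

Let chi (X : {set I}) := [ffun m => if m \in X then a1 else a0].

Let chiE X m : (chi X m == a1) = (m \in X).
Proof. by rewrite ffunE; case: (m \in X); rewrite ?eqxx // (negbTE a0_neq_a1). Qed.

(* The sets of coordinates [X] whose indicator [Phi] identifies with the constant
   [a1] form a filter; its least element carries the kernel of [Phi]. *)
Let ker_filter X := Phi (chi X) == Phi (chi setT).

Let ker_filterI X Y : ker_filter X -> ker_filter Y -> ker_filter (X :&: Y).
Proof.
move=> /eqP X_ker /eqP Y_ker; apply/eqP; rewrite -Y_ker.
pose both (a b _ : A) := if (a == a1) && (b == a1) then a1 else a0.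
have := hom_pointwise_congr both (chi Y) (chi Y) Phi_hom X_ker.
have -> : [ffun m => both (chi X m) (chi Y m) (chi Y m)] = chi (X :&: Y).
  by apply/ffunP => m; rewrite /both [LHS]ffunE !chiE [RHS]ffunE inE.
have -> // : [ffun m => both (chi setT m) (chi Y m) (chi Y m)] = chi Y.
by apply/ffunP => m; rewrite /both [LHS]ffunE !chiE [RHS]ffunE in_setT.
Qed.

Let ker_filter_agree x y : Phi x = Phi y -> ker_filter [set m | x m == y m].
Proof.
move=> Phi_xy; apply/eqP.
pose same (a b _ : A) := if a == b then a1 else a0.
have := hom_pointwise_congr same y y Phi_hom Phi_xy.
have -> : [ffun m => same (x m) (y m) (y m)] = chi [set m | x m == y m].
  by apply/ffunP => m; rewrite /same !ffunE inE.
have -> // : [ffun m => same (y m) (y m) (y m)] = chi setT.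
by apply/ffunP => m; rewrite /same !ffunE in_setT eqxx.
Qed.

Lemma hom_kernel_coords :
  exists J : {set I}, forall x y, Phi x = Phi y <-> {in J, forall m, x m = y m}.
Proof.
pose J := \bigcap_(X | ker_filter X) X.
have J_ker : ker_filter J.
  by apply: (big_ind ker_filter); [exact: eqxx | exact: ker_filterI | ].
exists J => x y; split=> [/ker_filter_agree/bigcap_inf/subsetP xy m /xy|xy].
  by rewrite inE => /eqP.
pose select (c b d : A) := if c == a1 then b else d.
have := hom_pointwise_congr select y x Phi_hom (eqP J_ker).
have -> : [ffun m => select (chi J m) (y m) (x m)] = x.
  by apply/ffunP => m; rewrite /select [LHS]ffunE chiE; case: ifP => // /xy.
have -> // : [ffun m => select (chi setT m) (y m) (x m)] = y.
by apply/ffunP => m; rewrite /select [LHS]ffunE chiE in_setT.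
Qed.

End Kernel.

Lemma hom_to_base_proj (I : finType) (phi : {ffun I -> A} -> A) :
  1 < #|A| -> is_hom (pointwise_ops oA I) oA phi -> exists i, forall x, phi x = x i.
Proof.
move=> A_gt1 phi_hom; have [J phiP] := hom_kernel_coords phi_hom.
have phiC := hom_const phi_hom.
have [i iJ] : exists i, i \in J.
  have [J0|[i iJ]] := set_0Vmem J; last by exists i.
  have : phi [ffun _ => a0] = phi [ffun _ => a1] by apply/phiP => m; rewrite J0 inE.
  by rewrite !phiC => /eqP; rewrite (negbTE a0_neq_a1).
(* Two coordinates in [J] would embed [A * A] into [A]. *)
have J_i k : k \in J -> k = i.
  move=> kJ; apply/eqP; apply/negP => /negP k_neq_i.
  pose pair (p : A * A) := phi [ffun l => if l == i then p.1 else if l == k then p.2 else a0].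
  have pair_inj : injective pair.
    move=> [p1 p2] [q1 q2] /phiP pq.
    have := pq i iJ; have := pq k kJ.
    by rewrite !ffunE eqxx (negbTE k_neq_i) eqxx /= => -> ->.
  have := leq_card pair pair_inj; rewrite card_prod; nia.
by exists i => x; rewrite -[RHS]phiC; apply/phiP => k /J_i ->; rewrite ffunE.
Qed.

Lemma iso_power_of_kernel_coords (I T : finType) (oT : operations S T)
  (Phi : {ffun I -> A} -> T) (J : {set I}) :
  is_hom (pointwise_ops oA I) oT Phi -> (forall t, exists x, Phi x = t) ->
  (forall x y, Phi x = Phi y <-> {in J, forall m, x m = y m}) ->
  exists n (h : T -> {ffun 'I_n -> A}),
    bijective h /\ is_embedding oT (@power_ops S A oA n) h.
Proof.
move=> Phi_hom /fin_all_exists[pre preK] PhiP.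
pose h t := [ffun i : 'I_#|J| => pre t (enum_val i)].
have h_inj : injective h.
  move=> t t' /ffunP htt'; rewrite -(preK t) -(preK t'); apply/PhiP => m mJ.
  by have := htt' (enum_rank_in mJ m); rewrite !ffunE enum_rankK_in.
have h_hom : is_hom oT (@power_ops S A oA #|J|) h.
  move=> f args; apply/ffunP => i; rewrite /power_ops !ffunE.
  have : Phi (pre (oT f args)) = Phi (pointwise_ops oA I f (fun j => pre (args j))).
    rewrite Phi_hom preK; congr (oT f _); apply: functional_extensionality => j.
    by rewrite preK.
  move/PhiP/(_ (enum_val i) (enum_valP i)) ->; rewrite ffunE.
  by congr (oA _); apply: functional_extensionality => j; rewrite ffunE.
pose ext (z : {ffun 'I_#|J| -> A}) :=
  [ffun m => if [pick i | enum_val i == m] is Some i then z i else a0].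
have extK z : h (Phi (ext z)) = z.
  apply/ffunP => i; rewrite ffunE.
  have : Phi (pre (Phi (ext z))) = Phi (ext z) by rewrite preK.
  move/PhiP/(_ (enum_val i) (enum_valP i)) ->; rewrite ffunE.
  by case: pickP => [i' /eqP /enum_val_inj -> //|/(_ i)]; rewrite eqxx.
exists #|J|, h; split=> //; exists (fun z => Phi (ext z)) => // t.
by apply: h_inj; rewrite extK.
Qed.

Lemma Vfin_free_cover (T : finType) (oT : operations S T) :
  in_Vfin oA oT -> exists (n : nat) (Phi : {ffun {ffun 'I_n -> A} -> A} -> T),
    is_hom (pointwise_ops oA _) oT Phi /\ forall t, exists x, Phi x = t.
Proof.
move=> [/card_gt0P[t0 _] T_id].
pose N := #|T|; pose M := {ffun 'I_N.+1 -> A}.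
pose gen (j : 'I_N.+1) := nth t0 (enum T) j.
have /fin_all_exists[tm tmE] : forall F : {ffun M -> A},
    exists t : term S N.+1, forall v, eval oA v t = F (finfun v).
  by move=> F; apply: term_complete.
pose Phi F := eval oT gen (tm F).
(* Independent of the representing term, as [T] satisfies the identities of [A]. *)
have PhiE (F : {ffun M -> A}) s : (forall v, eval oA v s = F (finfun v)) -> Phi F = eval oT gen s.
  by move=> sE; apply: T_id => v; rewrite tmE sE.
exists N.+1, Phi; split.
  move=> f Fs; rewrite (PhiE _ (App (fun j => tm (Fs j)))) // => v /=.
  rewrite /pointwise_ops ffunE; congr (oA _).
  by apply: functional_extensionality => j; rewrite tmE.
move=> t; have t_idx : index t (enum T) < N.+1.
  by apply: leqW; rewrite /N cardE index_mem mem_enum.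
exists [ffun m : M => m (Ordinal t_idx)].
rewrite (PhiE _ (Var _ (Ordinal t_idx))) /=; last by move=> v; rewrite !ffunE.
by rewrite /gen /= nth_index ?mem_enum.
Qed.

Lemma Vfin_iso_power (T : finType) (oT : operations S T) :
  in_Vfin oA oT -> exists n (h : T -> {ffun 'I_n -> A}),
    bijective h /\ is_embedding oT (@power_ops S A oA n) h.
Proof.
move=> /Vfin_free_cover[n [Phi [Phi_hom Phi_surj]]].
have [J PhiP] := hom_kernel_coords Phi_hom.
exact: iso_power_of_kernel_coords Phi_hom Phi_surj PhiP.
Qed.

Lemma power_embedding_coords n m (F : {ffun 'I_n -> A} -> {ffun 'I_m -> A}) :
  1 < #|A| -> is_embedding (@power_ops S A oA n) (@power_ops S A oA m) F ->
  exists2 g : 'I_m -> 'I_n, (forall i, exists j, g j = i)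
                          & forall x, F x = [ffun j => x (g j)].
Proof.
move=> A_gt1 [F_hom F_inj].
have /fin_all_exists[g gE] : forall j, exists i, forall x, F x j = x i.
  move=> j; apply: (hom_to_base_proj (phi := fun x => F x j)) => // f args.
  by rewrite F_hom /power_ops ffunE.
have FE x : F x = [ffun j => x (g j)] by apply/ffunP => j; rewrite gE ffunE.
exists g => // i; have [j /eqP gj|g_miss] := pickP (fun j => g j == i).
  by exists j.
(* Otherwise [F] would not separate the constant [a0] from the point mass at [i]. *)
have : [ffun _ : 'I_n => a0] = [ffun k => if k == i then a1 else a0].
  by apply: F_inj; rewrite !FE; apply/ffunP => j; rewrite !ffunE g_miss.
by move/ffunP/(_ i); rewrite !ffunE eqxx => /eqP; rewrite (negbTE a0_neq_a1).
Qed.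

End Primal.

(* [sigma j] counts the [j'] of smaller key [f j' * m + j'], an injective refinement of [f]. *)
Lemma exists_perm_refining m (f : 'I_m -> nat) :
  exists sigma : 'S_m, forall j1 j2, f j1 < f j2 -> sigma j1 < sigma j2.
Proof.
pose key (j : 'I_m) := f j * m + j.
have key_mono j1 j2 : f j1 < f j2 -> key j1 < key j2.
  by rewrite /key; have := ltn_ord j1; have := ltn_ord j2; nia.
have key_inj : injective key.
  move=> j1 j2 /(congr1 (modn^~ m)); rewrite /key !modnMDl !modn_small //.
  exact: val_inj.
pose below j := [set j' | key j' < key j].
have below_lt j : #|below j| < m.
  rewrite -[X in _ < X]card_ord -cardsT; apply: proper_card; apply/properP.
  by split; [exact: subsetT | exists j; rewrite ?in_setT // inE ltnn].
pose rho j := Ordinal (below_lt j).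
have rho_mono j1 j2 : key j1 < key j2 -> rho j1 < rho j2.
  move=> j12; apply: proper_card; apply/properP; split.
    by apply/subsetP => j; rewrite !inE => /ltn_trans; apply.
  by exists j1; rewrite !inE ?ltnn.
have rho_inj : injective rho.
  move=> j1 j2 rho12; apply: key_inj.
  by case: (ltngtP (key j1) (key j2)) => // /rho_mono; rewrite rho12 ltnn.
by exists (perm rho_inj) => j1 j2 /key_mono; rewrite !permE; apply: rho_mono.
Qed.

Section Antilex.
Variables (A : eqType) (lt : A -> A -> Prop).
Hypothesis lt_order : strict_linear_order lt.

Definition rank_antilex_lt n (rk : 'I_n -> nat) (x y : {ffun 'I_n -> A}) :=
  exists i, (forall k, rk i < rk k -> x k = y k) /\ lt (x i) (y i).

Definition perm_rank n (pi : 'S_n) (i : 'I_n) : nat := (pi^-1)%g i.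

Lemma perm_rank_inj n (pi : 'S_n) : injective (perm_rank pi).
Proof. by move=> i j /val_inj/perm_inj. Qed.

Lemma antilex_ltE n (pi : 'S_n) x y :
  antilex_lt lt pi x y <-> rank_antilex_lt (perm_rank pi) x y.
Proof.
rewrite /perm_rank; split=> [[s [xy_above xy_s]]|[i [xy_above xy_i]]].
  exists (pi s); rewrite permK; split=> // k sk.
  by rewrite -(permKV pi k); apply: xy_above.
exists (pi^-1 i)%g; rewrite permKV; split=> // t it.
by apply: xy_above; rewrite permK.
Qed.

Section Rank.
Variables (n : nat) (rk : 'I_n -> nat).
Hypothesis rk_inj : injective rk.

Lemma rank_antilex_irr x : ~ rank_antilex_lt rk x x.
Proof. by case: lt_order => irr _ [i [_ /irr]]. Qed.

Lemma rank_antilex_asym x y :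
  rank_antilex_lt rk x y -> ~ rank_antilex_lt rk y x.
Proof.
case: lt_order => irr [tr _] [i [xy_above xy_i]] [j [yx_above yx_j]].
case: (ltngtP (rk i) (rk j)) => [ij|ji|/rk_inj ij].
- by move: yx_j; rewrite (xy_above j ij) => /irr.
- by move: xy_i; rewrite (yx_above i ji) => /irr.
- by subst j; apply: (irr _ (tr _ _ _ xy_i yx_j)).
Qed.

Lemma rank_antilex_trans x y z :
  rank_antilex_lt rk x y -> rank_antilex_lt rk y z -> rank_antilex_lt rk x z.
Proof.
case: lt_order => _ [tr _] [i [xy_above xy_i]] [j [yz_above yz_j]].
case: (ltngtP (rk i) (rk j)) => [ij|ji|/rk_inj ij].
- exists j; split; last by rewrite xy_above.
  by move=> k jk; rewrite xy_above ?yz_above //; apply: ltn_trans jk.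
- exists i; split; last by rewrite -yz_above.
  by move=> k ik; rewrite xy_above ?yz_above //; apply: ltn_trans ik.
- subst j; exists i; split; last exact: tr xy_i yz_j.
  by move=> k ik; rewrite xy_above ?yz_above.
Qed.

Lemma rank_antilex_total x y :
  x != y -> rank_antilex_lt rk x y \/ rank_antilex_lt rk y x.
Proof.
case: lt_order => _ [_ tot] x_neq_y.
have [i0 xy_i0|x_eq_y] := pickP (fun i => x i != y i); last first.
  by case/eqP: x_neq_y; apply/ffunP => i; apply/eqP/negbFE/x_eq_y.
have [i xy_i i_max] := @arg_maxnP _ i0 (fun i => x i != y i) rk xy_i0.
have xy_above k : rk i < rk k -> x k = y k.
  by move=> ik; apply/eqP/negPn/negP => /i_max; rewrite /geq /= leqNgt ik.
have /tot[l|l] : x i <> y i by apply/eqP.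
  by left; exists i.
by right; exists i; split=> // k /xy_above.
Qed.

End Rank.

Lemma antilex_le_linear n (pi : 'S_n) : linear_order (antilex_le lt pi).
Proof.
have rk_inj := @perm_rank_inj n pi.
rewrite /antilex_le; split; [by left | split; [|split]].
- move=> x y [//|/antilex_ltE xy] [//|/antilex_ltE yx].
  by case: (rank_antilex_asym rk_inj xy yx).
- move=> x y z [->//|/antilex_ltE xy] [<-|/antilex_ltE yz]; right.
    exact/antilex_ltE.
  exact/antilex_ltE/(rank_antilex_trans rk_inj xy yz).
- move=> x y; have [->|x_neq_y] := eqVneq x y; first by left; left.
  by case: (rank_antilex_total (perm_rank pi) x_neq_y) => /antilex_ltE;
    [left | right]; right.
Qed.

Lemma rank_antilex_pullback n m (rk : 'I_n -> nat) (rk' : 'I_m -> nat)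
  (g : 'I_m -> 'I_n) (x y : {ffun 'I_n -> A}) :
  (forall i, exists j, g j = i) ->
  (forall j1 j2, rk (g j1) < rk (g j2) -> rk' j1 < rk' j2) ->
  rank_antilex_lt rk' [ffun j => x (g j)] [ffun j => y (g j)] ->
  rank_antilex_lt rk x y.
Proof.
move=> g_surj g_mono [j [xy_above xy_j]].
exists (g j); split; last by rewrite !ffunE in xy_j.
move=> k; have [j' <-] := g_surj k => /g_mono jj'.
by have := xy_above j' jj'; rewrite !ffunE.
Qed.

Lemma antilex_le_reindex n m (pi : 'S_n) (g : 'I_m -> 'I_n) :
  (forall i, exists j, g j = i) ->
  exists pi' : 'S_m, forall x y : {ffun 'I_n -> A},
    antilex_le lt pi x y <->
    antilex_le lt pi' [ffun j => x (g j)] [ffun j => y (g j)].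
Proof.
move=> g_surj; have [sigma sigma_mono] := exists_perm_refining (perm_rank pi \o g).
exists (sigma^-1)%g.
have g_mono j1 j2 : perm_rank pi (g j1) < perm_rank pi (g j2) ->
    perm_rank (sigma^-1)%g j1 < perm_rank (sigma^-1)%g j2.
  by rewrite /perm_rank !invgK; apply: sigma_mono.
have reindex_inj : injective (fun x : {ffun 'I_n -> A} => [ffun j => x (g j)]).
  move=> x y /ffunP xy; apply/ffunP => i; have [j <-] := g_surj i.
  by have := xy j; rewrite !ffunE.
have ltP x y : antilex_lt lt pi x y <->
    antilex_lt lt (sigma^-1)%g [ffun j => x (g j)] [ffun j => y (g j)].
  rewrite !antilex_ltE; split=> [xy|/(rank_antilex_pullback g_surj g_mono)//].
  have : [ffun j => x (g j)] != [ffun j => y (g j)].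
    apply/eqP => /reindex_inj x_eq_y; subst y; exact: rank_antilex_irr xy.
  case/(rank_antilex_total (perm_rank (sigma^-1)%g)) => // yx.
  by case: (rank_antilex_asym (@perm_rank_inj n pi) xy
                              (rank_antilex_pullback g_surj g_mono yx)).
move=> x y; rewrite /antilex_le ltP.
by split=> [[->|]|[/reindex_inj ->|]]; auto.
Qed.

End Antilex.

Lemma linear_order_pullback (T U : Type) (r : T -> T -> Prop)
  (R : U -> U -> Prop) (h : T -> U) :
  injective h -> (forall x y, r x y <-> R (h x) (h y)) ->
  linear_order R -> linear_order r.
Proof.
move=> h_inj rR [R_refl [R_anti [R_trans R_total]]].
split; first by move=> x; apply/rR.
split; first by move=> x y /rR xy /rR yx; apply/h_inj/R_anti.
split; first by move=> x y z /rR xy /rR yz; apply/rR/(R_trans _ _ _ xy yz).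
by move=> x y; case: (R_total (h x) (h y)) => /rR; [left | right].
Qed.

Lemma embedding_power_identities (S : signature) (A : Type) (oA : operations S A)
  (I : finType) (T : Type) (oT : operations S T) (h : T -> {ffun I -> A}) :
  is_embedding oT (pointwise_ops oA I) h -> satisfies_identities_of oA oT.
Proof.
move=> [h_hom h_inj] k s t st w; apply: h_inj.
by rewrite !(hom_eval _ _ h_hom) !eval_pointwise; apply/ffunP => i; rewrite !ffunE st.
Qed.

Section Expansion.
Variables (S : signature) (A : finType) (oA : operations S A).
Variable lt : A -> A -> Prop.
Hypothesis lt_order : strict_linear_order lt.

Lemma OVfin_linear_Vfin (a : A) (T : finType) (oT : operations S T)
  (r : T -> T -> Prop) :
  in_OVfin oA lt oT r -> linear_order r /\ in_Vfin oA oT.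
Proof.
move=> [n [pi [h [[h' _ h'K] [h_emb hr]]]]].
split; first exact: linear_order_pullback h_emb.2 hr (antilex_le_linear lt_order pi).
split; last exact: embedding_power_identities h_emb.
by apply/card_gt0P; exists (h' [ffun _ => a]).
Qed.

Hypothesis term_complete : forall (k : nat) (g : ('I_k.+1 -> A) -> A),
  exists t : term S k.+1, forall v, eval oA v t = g v.
Variables (a0 a1 : A).
Hypothesis a0_neq_a1 : a0 != a1.

Lemma Vfin_has_OVfin_order (T : finType) (oT : operations S T) :
  in_Vfin oA oT -> exists r, in_OVfin oA lt oT r.
Proof.
move=> /(Vfin_iso_power term_complete a0_neq_a1)[n [h [h_bij h_emb]]].
by exists (fun x y => antilex_le lt 1%g (h x) (h y)), n, 1%g, h.
Qed.

Lemma OVfin_reasonable : is_reasonable (in_Vfin oA) (in_OVfin oA lt).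
Proof.
move=> T1 T2 o1 o2 f _ T2_Vfin [f_hom f_inj] r1 [n [pi [h1 [h1_bij [h1_emb h1r]]]]].
have [m [h2 [h2_bij [h2_hom h2_inj]]]] := Vfin_iso_power term_complete a0_neq_a1 T2_Vfin.
have [h1' h1K h1'K] := h1_bij.
pose F x := h2 (f (h1' x)).
have F_emb : is_embedding (@power_ops S A oA n) (@power_ops S A oA m) F.
  split; last by move=> x y /h2_inj/f_inj/(can_inj h1'K).
  apply: comp_hom h2_hom; apply: comp_hom f_hom.
  exact: inv_hom h1_emb.1 h1_emb.2 h1'K.
have A_gt1 : 1 < #|A| by apply/card_gt1P; exists a0, a1.
have [g g_surj FE] := power_embedding_coords term_complete a0_neq_a1 A_gt1 F_emb.
have [pi' pi'E] := antilex_le_reindex lt_order pi g_surj.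
exists (fun x y => antilex_le lt pi' (h2 x) (h2 y)); split.
  by exists m, pi', h2.
by split=> // x y; rewrite h1r pi'E -!FE /F !h1K.
Qed.

End Expansion.

Theorem lemma7p4 (S : signature) (A : finType) (oA : operations S A)
  (lt : A -> A -> Prop) :
  primal oA -> strict_linear_order lt ->
  is_order_expansion (in_Vfin oA) (in_OVfin oA lt) /\
  is_reasonable (in_Vfin oA) (in_OVfin oA lt).
Proof.
move=> [/card_gt1P[a0 [a1 [_ _ a0_neq_a1]]] term_complete] lt_order.
split; first split.
- by move=> T oT r /(OVfin_linear_Vfin lt_order a0).
- by move=> T oT /(Vfin_has_OVfin_order lt term_complete a0_neq_a1).
- exact (OVfin_reasonable lt_order term_complete a0_neq_a1).
Qed.
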